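(* Let $\langle A, \leq, \otimes, \mathbf{1}\rangle$ be a finitely distributive semi-lattice monoid. Then $C'(A) = C(A)$, where $C'(A) = \{c \in A \mid \exists a,b \in A.\ a < b \wedge a \otimes c = b \otimes c\}$ and $C(A) = \{c \in A \mid \exists a,b\in A.\ a \neq b \wedge a \otimes c = b \otimes c\}$.
   Context: A semi-lattice monoid (SLM) is a structure $\langle A, \leq, \otimes, \mathbf{1}\rangle$ where $\langle A, \otimes, \mathbf{1}\rangle$ is a commutative monoid and $\langle A,\leq\rangle$ is a partial order in which every finite subset $X$ (including $\emptyset$) has a least upper bound $\bigvee X$. It is finitely distributive if $a \otimes \bigvee X = \bigvee\{a \otimes x \mid x \in X\}$ for every finite $X \subseteq A$ and every $a \in A$. $a<b$ means $a\leq b$ and $a\neq b$. *)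

From Stdlib Require Import List.
Import ListNotations.

Definition is_lub {A : Type} (le : A -> A -> Prop) (X : list A) (s : A) : Prop :=
  (forall x, In x X -> le x s) /\
  (forall u, (forall x, In x X -> le x u) -> le s u).

Record SLM : Type := {
  carrier :> Type;
  le : carrier -> carrier -> Prop;
  mul : carrier -> carrier -> carrier;
  one : carrier;
  sup : list carrier -> carrier;
  mul_assoc : forall a b c, mul a (mul b c) = mul (mul a b) c;
  mul_comm : forall a b, mul a b = mul b a;
  mul_one : forall a, mul a one = a;
  le_refl : forall a, le a a;
  le_trans : forall a b c, le a b -> le b c -> le a c;
  le_antisym : forall a b, le a b -> le b a -> a = b;
  sup_lub : forall X : list carrier, is_lub le X (sup X)
}.

Definition fin_distributive (S : SLM) : Prop :=
  forall (a : S) (X : list S), mul S a (sup S X) = sup S (map (mul S a) X).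

Definition lt (S : SLM) (a b : S) : Prop := le S a b /\ a <> b.

Definition Cprime (S : SLM) (c : S) : Prop :=
  exists a b : S, lt S a b /\ mul S a c = mul S b c.

Definition Cset (S : SLM) (c : S) : Prop :=
  exists a b : S, a <> b /\ mul S a c = mul S b c.

(* If [a <> b] and [a (x) c = b (x) c], put [s = a \/ b]. Distributivity gives
   [s (x) c = (a (x) c) \/ (b (x) c) = a (x) c], and [s] cannot equal both [a]
   and [b], so one of [a < s], [b < s] witnesses [c] in [C'(A)]. *)

From Stdlib Require Import List Classical.
Import ListNotations.

Section SemilatticeMonoid.

Variable S : SLM.

Lemma sup_pair_upper_l (a b : S) : le S a (sup S [a; b]).
Proof. apply (proj1 (sup_lub S [a; b])); simpl; auto. Qed.

Lemma sup_pair_upper_r (a b : S) : le S b (sup S [a; b]).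
Proof. apply (proj1 (sup_lub S [a; b])); simpl; auto. Qed.

Lemma sup_pair_idem (x : S) : sup S [x; x] = x.
Proof.
  apply le_antisym.
  - apply (proj2 (sup_lub S [x; x])).
    intros y [<- | [<- | []]]; apply le_refl.
  - apply sup_pair_upper_l.
Qed.

Lemma mulr_sup_pair (Hd : fin_distributive S) (a b c : S) :
  mul S (sup S [a; b]) c = sup S [mul S a c; mul S b c].
Proof.
  rewrite mul_comm, Hd; simpl.
  now rewrite (mul_comm S c a), (mul_comm S c b).
Qed.

Lemma lt_sup_pair (a b : S) :
  a <> b -> lt S a (sup S [a; b]) \/ lt S b (sup S [a; b]).
Proof.
  intros Hab.
  destruct (classic (a = sup S [a; b])) as [Ea | Na].
  - right; split; [apply sup_pair_upper_r |].
    intros Eb; apply Hab; congruence.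
  - left; split; [apply sup_pair_upper_l | exact Na].
Qed.

Lemma Cprime_Cset (c : S) : Cprime S c -> Cset S c.
Proof. intros (a & b & [_ Hab] & He); now exists a, b. Qed.

Lemma Cset_Cprime (Hd : fin_distributive S) (c : S) : Cset S c -> Cprime S c.
Proof.
  intros (a & b & Hab & He).
  assert (Hs : mul S (sup S [a; b]) c = mul S a c).
  { now rewrite mulr_sup_pair, <- He, sup_pair_idem. }
  destruct (lt_sup_pair a b Hab) as [Ha | Hb].
  - exists a, (sup S [a; b]); auto.
  - exists b, (sup S [a; b]); split; [exact Hb | congruence].
Qed.

End SemilatticeMonoid.

Theorem lemma7 (S : SLM) (Hd : fin_distributive S) :
  forall c : S, Cprime S c <-> Cset S c.
Proof.
  intros c; split; [apply Cprime_Cset | apply Cset_Cprime, Hd].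
Qed.
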